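(* Let $P=\{x\in\mathbb R^n : Ax=b,\ Bx\le d\}$ with $A\in\mathbb R^{m_A\times n}$, $B\in\mathbb R^{m_B\times n}$ be a pointed polyhedron and let $x_0\in P$. Let $C_{A,B,x_0}$ be the face obtained by intersecting the cone $$C_{A,B}=\{(x,y^+,y^-)\in\mathbb R^{n+2m_B} : Ax=0,\ Bx=y^+-y^-,\ y^+,y^-\ge 0\}$$ with the hyperplanes $y^+_i=0$ for each $i\le m_B$ such that $(Bx_0)_i=d_i$. Then at most $m_B$ extreme rays of $C_{A,B,x_0}$ satisfy $y^+-y^-=0$, and the remaining extreme rays of $C_{A,B,x_0}$ give exactly the circuit directions of $P$ that are strictly feasible at $x_0$: they are the rays spanned by $(g,y^+,y^-)$ with $y^+_i=\max\{(Bg)_i,0\}$, $y^-_i=\max\{-(Bg)_i,0\}$, where $g$ ranges over the circuits $g\in\mathcal C(A,B)$ that are strictly feasible at $x_0$. Furthermore, each feasible direction $u$ at $x_0$ in $P$ has a representative $(u,y^+,y^-)$ in $C_{A,B,x_0}$.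
   Context: $P$ is pointed means $\operatorname{rank}\binom{A}{B}=n$. The set of circuits $\mathcal C(A,B)$ of $P$ consists of all $g\in\ker(A)\setminus\{0\}$ normalized to coprime integer components for which $Bg$ is support-minimal over $\{Bx : x\in\ker(A)\setminus\{0\}\}$, i.e. no $x\in\ker(A)\setminus\{0\}$ satisfies $\operatorname{supp}(Bx)\subsetneq\operatorname{supp}(Bg)$. A circuit direction is a positive scalar multiple of a circuit. A direction $u$ is (strictly) feasible at $x_0\in P$ if $x_0+\alpha u\in P$ for some $\alpha>0$. *)

From HB Require Import structures.
From mathcomp Require Import all_boot all_order all_algebra.
Set Implicit Arguments. Unset Strict Implicit. Unset Printing Implicit Defensive.
Import Order.TTheory GRing.Theory Num.Theory.
Local Open Scope ring_scope.

Section Defs.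
Variable R : realFieldType.

Definition in_poly mA mB n (A : 'M[R]_(mA, n)) (b : 'cV[R]_mA)
  (B : 'M[R]_(mB, n)) (d : 'cV[R]_mB) (x : 'cV[R]_n) : Prop :=
  A *m x = b /\ forall i, (B *m x) i 0 <= d i 0.

Definition pointed mA mB n (A : 'M[R]_(mA, n)) (B : 'M[R]_(mB, n)) : Prop :=
  \rank (col_mx A B) = n.

Definition feasible_dir mA mB n (A : 'M[R]_(mA, n)) (b : 'cV[R]_mA)
  (B : 'M[R]_(mB, n)) (d : 'cV[R]_mB) (x0 u : 'cV[R]_n) : Prop :=
  exists alpha : R, 0 < alpha /\ in_poly A b B d (x0 + alpha *: u).

Definition supp m (v : 'cV[R]_m) : {set 'I_m} := [set i | v i 0 != 0].

(* g is a circuit of P, up to positive scaling: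
   g in ker A, g <> 0, and B g is support-minimal among {B x | x in ker A \ 0}. *)
Definition circuit mA mB n (A : 'M[R]_(mA, n)) (B : 'M[R]_(mB, n))
  (g : 'cV[R]_n) : Prop :=
  A *m g = 0 /\ g != 0 /\
  ~ (exists x : 'cV[R]_n, [/\ A *m x = 0, x != 0 &
        supp (B *m x) \proper supp (B *m g)]).

Definition zx n mB (z : 'cV[R]_(n + mB + mB)) : 'cV[R]_n := usubmx (usubmx z).
Definition zyp n mB (z : 'cV[R]_(n + mB + mB)) : 'cV[R]_mB := dsubmx (usubmx z).
Definition zym n mB (z : 'cV[R]_(n + mB + mB)) : 'cV[R]_mB := dsubmx z.
Definition triple n mB (x : 'cV[R]_n) (yp ym : 'cV[R]_mB) : 'cV[R]_(n + mB + mB) :=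
  col_mx (col_mx x yp) ym.

Definition in_cone mA mB n (A : 'M[R]_(mA, n)) (B : 'M[R]_(mB, n))
  (z : 'cV[R]_(n + mB + mB)) : Prop :=
  [/\ A *m zx z = 0, B *m zx z = zyp z - zym z,
      forall i, 0 <= zyp z i 0 & forall i, 0 <= zym z i 0].

Definition in_face mA mB n (A : 'M[R]_(mA, n)) (B : 'M[R]_(mB, n))
  (d : 'cV[R]_mB) (x0 : 'cV[R]_n) (z : 'cV[R]_(n + mB + mB)) : Prop :=
  in_cone A B z /\ forall i, (B *m x0) i 0 = d i 0 -> zyp z i 0 = 0.

Definition extreme_ray N (K : 'cV[R]_N -> Prop) (r : 'cV[R]_N) : Prop :=
  [/\ K r, r != 0 &
      forall u v, K u -> K v -> r = u + v ->
        exists2 lu : R, 0 <= lu & exists2 lv : R, 0 <= lv & u = lu *: r /\ v = lv *: r].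

Definition same_ray N (r s : 'cV[R]_N) : Prop :=
  exists2 l : R, 0 < l & r = l *: s.

Definition pospart m (v : 'cV[R]_m) : 'cV[R]_m := \col_i Num.max (v i 0) 0.
Definition negpart m (v : 'cV[R]_m) : 'cV[R]_m := \col_i Num.max (- v i 0) 0.

End Defs.

From HB Require Import structures.
From mathcomp Require Import all_boot all_order all_algebra.
From mathcomp Require Import ring lra.
Import Order.TTheory GRing.Theory Num.Theory.
Local Open Scope ring_scope.

(* If an extreme ray of the face has
   a coordinate [j] with [y+_j, y-_j > 0], splitting off a multiple of the ray
   [(0, e_j, e_j)] shows that it is that ray; these are the rays with [y+ = y-]
   (pointedness forces [x = 0]).  Otherwise [y+] and [y-] have disjoint supports
   and the ray is the lift [(x, max(Bx,0), max(-Bx,0))] of [x], which lies in the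
   face exactly when [x] is a feasible direction at [x0].  A lift is extreme
   exactly when [Bx] is support-minimal: a kernel vector [y] with
   [supp(By) ⊊ supp(Bx)] lets [x ± εy] keep the sign pattern of [Bx], so the lift
   of [x] is the midpoint of two lifts in the face; conversely, every summand of
   the lift of a circuit [g] has an [x]-part [x'] with [supp(Bx') ⊆ supp(Bg)],
   and minimality of [g] makes [x'] a multiple of [g]. *)

Section PositivePart.
Context {R : realFieldType}.
Implicit Types a b c t : R.

Lemma max0_ge0 a : 0 <= Num.max a 0.
Proof. by rewrite le_max lexx orbT. Qed.

Lemma max0_eq0 a : (Num.max a 0 == 0) = (a <= 0).
Proof. by have [_|/gt_eqF] := leP a 0; rewrite ?eqxx. Qed.

Lemma max0_subN a : Num.max a 0 - Num.max (- a) 0 = a.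
Proof. by rewrite !maxEle; repeat case: leP => ?; lra. Qed.

Lemma max0_disjoint {a b} : 0 <= a -> 0 <= b -> a * b = 0 ->
  a = Num.max (a - b) 0 /\ b = Num.max (- (a - b)) 0.
Proof.
move=> a_ge0 b_ge0 /eqP; rewrite mulf_eq0 => /orP[] /eqP ab0;
  by rewrite !maxEle; repeat case: leP => ?; lra.
Qed.

Lemma max0_midpoint a t : `|t| <= `|a| ->
  Num.max (a + t) 0 + Num.max (a - t) 0 = Num.max a 0 *+ 2.
Proof.
rewrite ler_norml mulr2n => /andP[].
have [a_ge0|a_lt0] := leP 0 a; [rewrite ger0_norm // | rewrite ltr0_norm //];
  by move=> ? ?; rewrite !maxEle; repeat case: leP => ?; lra.
Qed.

Lemma max0_split_scale {b p p' q q' c} :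
  Num.max b 0 = p + p' -> Num.max (- b) 0 = q + q' ->
  0 <= p -> 0 <= p' -> 0 <= q -> 0 <= q' -> p - q = c * b ->
  [/\ p = c * Num.max b 0, q = c * Num.max (- b) 0 & b != 0 -> 0 <= c].
Proof.
rewrite !maxEle; repeat case: leP => ?; move=> *; split; try nra;
  by rewrite neq_lt => /orP[] ?; nra.
Qed.

Lemma exists_pos_mul_le m (a c : 'I_m -> R) :
  (forall i, 0 <= c i) -> (forall i, c i = 0 -> a i <= 0) ->
  exists2 e, 0 < e & forall i, e * a i <= c i.
Proof.
move=> c_ge0 c0_a_le0.
pose S := \sum_i `|a i| / c i.
have S_ge0 : 0 <= S by apply: sumr_ge0 => i _; rewrite divr_ge0.
have S1_gt0 : 0 < 1 + S by lra.
exists (1 + S)^-1 => [|i]; first by rewrite invr_gt0.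
rewrite -(ler_pM2l S1_gt0) mulrA mulfV ?gt_eqF // mul1r.
have [ci0|ci_neq0] := eqVneq (c i) 0; first by rewrite ci0 mulr0 c0_a_le0.
have ci_gt0 : 0 < c i by rewrite lt_def ci_neq0 c_ge0.
have le_S : `|a i| / c i <= S.
  by rewrite /S (bigD1 i) //= lerDl sumr_ge0 // => j _; rewrite divr_ge0.
have ai_le : a i <= `|a i| / c i * c i by rewrite divfK ?ler_norm.
nra.
Qed.

End PositivePart.

Section EntryLemmas.
Context {R : realFieldType} {m : nat}.
Implicit Types v w : 'cV[R]_m.

Lemma addcE v w i : (v + w) i 0 = v i 0 + w i 0.
Proof. by rewrite mxE. Qed.

Lemma subcE v w i : (v - w) i 0 = v i 0 - w i 0.
Proof. by rewrite !mxE. Qed.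

Lemma scalecE (c : R) v i : (c *: v) i 0 = c * v i 0.
Proof. by rewrite mxE. Qed.

Lemma deltacE (j i : 'I_m) : (delta_mx j 0 : 'cV[R]_m) i 0 = if i == j then 1 else 0.
Proof. by rewrite mxE eqxx andbT; case: (i == j). Qed.

Lemma pospartE v i : pospart v i 0 = Num.max (v i 0) 0.
Proof. by rewrite mxE. Qed.

Lemma negpartE v i : negpart v i 0 = Num.max (- v i 0) 0.
Proof. by rewrite mxE. Qed.

Lemma pospart_ge0 v i : 0 <= pospart v i 0.
Proof. by rewrite pospartE max0_ge0. Qed.

Lemma negpart_ge0 v i : 0 <= negpart v i 0.
Proof. by rewrite negpartE max0_ge0. Qed.

Lemma pospart_sub_negpart v : pospart v - negpart v = v.
Proof.
by apply/matrixP => i j; rewrite ord1 subcE pospartE negpartE max0_subN.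
Qed.

Lemma negpart_pospartN v : negpart v = pospart (- v).
Proof. by apply/matrixP => i j; rewrite ord1 negpartE pospartE mxE. Qed.

Lemma pospart_midpoint v w : (forall i, `|w i 0| <= `|v i 0|) ->
  pospart (v + w) + pospart (v - w) = pospart v *+ 2.
Proof.
move=> w_le; apply/matrixP => i j; rewrite ord1 mulmxnE addcE !pospartE.
by rewrite addcE subcE max0_midpoint.
Qed.

Lemma negpart_midpoint v w : (forall i, `|w i 0| <= `|v i 0|) ->
  negpart (v + w) + negpart (v - w) = negpart v *+ 2.
Proof.
move=> w_le; rewrite !negpart_pospartN !opprD pospart_midpoint // => i.
by rewrite !mxE !normrN.
Qed.

Lemma supp_sub_eq0 {v w i} : supp v \subset supp w -> w i 0 = 0 -> v i 0 = 0.
Proof.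
move=> /subsetP/(_ i); rewrite !inE => vw wi0; apply/eqP/negbNE/negP => /vw.
by rewrite wi0 eqxx.
Qed.

Lemma supp_scale (c : R) v : c != 0 -> supp (c *: v) = supp v.
Proof.
by move=> c_neq0; apply/setP => i; rewrite !inE scalecE mulf_eq0 negb_or c_neq0.
Qed.

End EntryLemmas.

Section Triples.
Context {R : realFieldType} {n mB : nat}.
Implicit Types (x : 'cV[R]_n) (p q : 'cV[R]_mB) (z : 'cV[R]_(n + mB + mB)).

Lemma zx_triple x p q : zx (triple x p q) = x.
Proof. by rewrite /zx /triple !col_mxKu. Qed.

Lemma zyp_triple x p q : zyp (triple x p q) = p.
Proof. by rewrite /zyp /triple col_mxKu col_mxKd. Qed.

Lemma zym_triple x p q : zym (triple x p q) = q.
Proof. by rewrite /zym /triple col_mxKd. Qed.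

Lemma tripleP z : exists x p q, z = triple x p q.
Proof. by exists (zx z), (zyp z), (zym z); rewrite /triple /zx /zyp /zym !vsubmxK. Qed.

Lemma triple_inj {x x' p p' q q'} :
  triple x p q = triple x' p' q' -> [/\ x = x', p = p' & q = q'].
Proof.
by move=> e; split; [rewrite -(zx_triple x p q) | rewrite -(zyp_triple x p q)
  | rewrite -(zym_triple x p q)]; rewrite e ?zx_triple ?zyp_triple ?zym_triple.
Qed.

Lemma triple0 : triple 0 0 0 = 0 :> 'cV[R]_(n + mB + mB).
Proof. by rewrite /triple !col_mx0. Qed.

Lemma triple_add x x' p p' q q' :
  triple x p q + triple x' p' q' = triple (x + x') (p + p') (q + q').
Proof. by rewrite /triple !add_col_mx. Qed.

Lemma triple_sub x x' p p' q q' :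
  triple x p q - triple x' p' q' = triple (x - x') (p - p') (q - q').
Proof. by rewrite /triple !opp_col_mx !add_col_mx. Qed.

Lemma triple_scale (c : R) x p q :
  c *: triple x p q = triple (c *: x) (c *: p) (c *: q).
Proof. by rewrite /triple !scale_col_mx. Qed.

Definition diag_ray (j : 'I_mB) : 'cV[R]_(n + mB + mB) :=
  triple 0 (delta_mx j 0) (delta_mx j 0).

Lemma diag_ray_neq0 j : diag_ray j != 0.
Proof.
apply/eqP; rewrite /diag_ray -triple0 => /triple_inj[_ /matrixP/(_ j 0) + _].
by rewrite deltacE eqxx mxE => /eqP; rewrite oner_eq0.
Qed.

End Triples.

Definition lift {R : realFieldType} {mB n} (B : 'M[R]_(mB, n)) (x : 'cV[R]_n) :=
  triple x (pospart (B *m x)) (negpart (B *m x)).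

Lemma pointed_ker_eq0 {R : realFieldType} {mA mB n} {A : 'M[R]_(mA, n)}
    {B : 'M[R]_(mB, n)} {x : 'cV[R]_n} :
  pointed A B -> A *m x = 0 -> B *m x = 0 -> x = 0.
Proof.
move=> AB_pointed Ax Bx; apply: trmx_inj; apply/eqP; rewrite trmx0.
have AB_free : row_free (col_mx A B)^T by rewrite /row_free mxrank_tr AB_pointed.
by rewrite -(mulmx_free_eq0 _ AB_free) -trmx_mul mul_col_mx Ax Bx col_mx0 trmx0.
Qed.

Section ExtremeRays.
Context {R : realFieldType} {N : nat} {K : 'cV[R]_N -> Prop}.

Lemma extreme_ray_summand {r u} :
  extreme_ray K r -> K u -> K (r - u) -> u != 0 -> same_ray r u.
Proof.
move=> [_ _ r_ext] Ku Kru u_neq0.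
have [lu lu_ge0 [lv _ [u_eq _]]] := r_ext u (r - u) Ku Kru (esym (subrKC _ _)).
have lu_neq0 : lu != 0 by apply: contraNneq u_neq0 => lu0; rewrite u_eq lu0 scale0r.
exists lu^-1; first by rewrite invr_gt0 lt_def lu_neq0.
by rewrite u_eq scalerA mulVf // scale1r.
Qed.

Lemma extreme_ray_midpoint {r u v} :
  (forall z c, K z -> 0 <= c -> K (c *: z)) ->
  extreme_ray K r -> K u -> K v -> u + v = r *+ 2 -> exists l, u = l *: r.
Proof.
move=> K_scale [_ _ r_ext] Ku Kv uv_eq.
have half_ge0 : 0 <= 2^-1 :> R by rewrite invr_ge0 ler0n.
have two_neq0 : 2 != 0 :> R by rewrite pnatr_eq0.
have r_eq : r = 2^-1 *: u + 2^-1 *: v.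
  by rewrite -scalerDr uv_eq -scaler_nat scalerA mulVf // scale1r.
have [lu _ [lv _ [u_eq _]]] :=
  r_ext _ _ (K_scale _ _ Ku half_ge0) (K_scale _ _ Kv half_ge0) r_eq.
by exists (2 * lu); rewrite -scalerA -u_eq scalerA mulfV // scale1r.
Qed.

End ExtremeRays.

Section Face.
Context {R : realFieldType} {mA mB n : nat}.
Context {A : 'M[R]_(mA, n)} {B : 'M[R]_(mB, n)} {d : 'cV[R]_mB} {x0 : 'cV[R]_n}.
Implicit Types (x u : 'cV[R]_n) (p q : 'cV[R]_mB).
Local Notation face := (in_face A B d x0).
Local Notation tight i := ((B *m x0) i 0 = d i 0).

Lemma in_cone_triple x p q :
  in_cone A B (triple x p q) <->
  [/\ A *m x = 0, B *m x = p - q, forall i, 0 <= p i 0 & forall i, 0 <= q i 0].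
Proof. by rewrite /in_cone zx_triple zyp_triple zym_triple. Qed.

Lemma in_face_triple x p q :
  face (triple x p q) <->
  [/\ A *m x = 0, B *m x = p - q, forall i, 0 <= p i 0, forall i, 0 <= q i 0 &
      forall i, tight i -> p i 0 = 0].
Proof.
rewrite /in_face in_cone_triple zyp_triple.
by split=> [[[]]|[]] *; do ?split.
Qed.

Lemma in_face_scale z (c : R) : face z -> 0 <= c -> face (c *: z).
Proof.
have [x [p [q ->]]] := tripleP z; rewrite triple_scale.
move=> /in_face_triple[Ax Bx p_ge0 q_ge0 p_tight] c_ge0; apply/in_face_triple; split.
- by rewrite -scalemxAr Ax scaler0.
- by rewrite -scalemxAr Bx scalerBr.
- by move=> i; rewrite scalecE mulr_ge0.
- by move=> i; rewrite scalecE mulr_ge0.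
- by move=> i /p_tight; rewrite scalecE => ->; rewrite mulr0.
Qed.

Lemma lift_in_faceP x :
  face (lift B x) <-> A *m x = 0 /\ forall i, tight i -> (B *m x) i 0 <= 0.
Proof.
rewrite /lift in_face_triple pospart_sub_negpart; split.
  by case=> Ax _ _ _ x_tight; split=> // i /x_tight /eqP; rewrite pospartE max0_eq0.
case=> Ax x_tight; split=> //; [exact: pospart_ge0 | exact: negpart_ge0 |].
by move=> i /x_tight; rewrite pospartE -max0_eq0 => /eqP.
Qed.

Lemma lift_midpoint {x u} : (forall i, `|(B *m u) i 0| <= `|(B *m x) i 0|) ->
  lift B (x + u) + lift B (x - u) = lift B x *+ 2.
Proof.
move=> Bu_le; rewrite /lift triple_add mulmxDr mulmxBr.
rewrite pospart_midpoint // negpart_midpoint // !mulr2n triple_add.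
by rewrite addrACA subrr addr0.
Qed.

Lemma lift_perturb_in_face {x u} : face (lift B x) -> A *m u = 0 ->
  (forall i, `|(B *m u) i 0| <= `|(B *m x) i 0|) -> face (lift B (x + u)).
Proof.
move=> /lift_in_faceP[Ax x_tight] Au Bu_le; apply/lift_in_faceP.
split=> [|i /x_tight Bxi]; first by rewrite mulmxDr Ax Au addr0.
by move: (Bu_le i); rewrite mulmxDr addcE ler_norml ler0_norm // => /andP[? ?]; lra.
Qed.

Lemma feasible_dirP {b} u : in_poly A b B d x0 ->
  feasible_dir A b B d x0 u <->
  A *m u = 0 /\ forall i, tight i -> (B *m u) i 0 <= 0.
Proof.
move=> [Ax0 Bx0_le]; split.
  case=> al [al_gt0 [Ax0u Bu_le]]; split.
    have alAu : al *: (A *m u) = 0.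
      by apply: (addrI b); rewrite addr0 -{1}Ax0 scalemxAr -mulmxDr.
    by move/eqP: alAu; rewrite scaler_eq0 gt_eqF // => /eqP.
  move=> i x0_tight; have := Bu_le i.
  rewrite mulmxDr -scalemxAr addcE scalecE x0_tight -lerBrDl subrr.
  by rewrite pmulr_rle0.
case=> Au u_tight.
have [al al_gt0 al_le] : exists2 al : R, 0 < al &
    forall i, al * (B *m u) i 0 <= d i 0 - (B *m x0) i 0.
  apply: exists_pos_mul_le => i; first by rewrite subr_ge0.
  by move/subr0_eq/esym/u_tight.
exists al; split=> //; split; first by rewrite mulmxDr -scalemxAr Au scaler0 addr0.
by move=> i; rewrite mulmxDr -scalemxAr addcE scalecE -lerBrDl.
Qed.

Lemma feasible_lift_in_face {b} u : in_poly A b B d x0 ->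
  feasible_dir A b B d x0 u <-> face (lift B u).
Proof. by move=> x0_in; rewrite (feasible_dirP _ x0_in) lift_in_faceP. Qed.

Lemma in_face_diag_split {x p q j} {c : R} :
  face (triple x p q) -> 0 < c -> c <= p j 0 -> c <= q j 0 ->
  face (c *: diag_ray j) /\ face (triple x p q - c *: diag_ray j).
Proof.
move=> /in_face_triple[Ax Bx p_ge0 q_ge0 p_tight] c_gt0 c_le_p c_le_q.
have tight_neq i : tight i -> i != j.
  by move/p_tight => pi0; apply: contraTneq c_le_p => <-; rewrite pi0 -ltNge.
rewrite /diag_ray triple_scale scaler0 triple_sub subr0; split;
  apply/in_face_triple; split=> [||i|i|i i_tight];
  rewrite ?mulmx0 ?subrr ?subcE ?scalecE ?deltacE //.
- by case: (i == j); rewrite ?mulr1 ?mulr0 ?(ltW c_gt0).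
- by case: (i == j); rewrite ?mulr1 ?mulr0 ?(ltW c_gt0).
- by rewrite (negbTE (tight_neq _ i_tight)) mulr0.
- by rewrite Bx opprB addrA subrK.
- by rewrite subr_ge0; case: eqP => [->|_]; rewrite ?mulr1 ?mulr0.
- by rewrite subr_ge0; case: eqP => [->|_]; rewrite ?mulr1 ?mulr0.
- by rewrite (negbTE (tight_neq _ i_tight)) mulr0 subr0 p_tight.
Qed.

Lemma extreme_face_ray_diag {x p q j} :
  extreme_ray face (triple x p q) -> 0 < p j 0 -> 0 < q j 0 ->
  same_ray (triple x p q) (diag_ray j).
Proof.
move=> r_ext p_gt0 q_gt0; have [r_face _ _] := r_ext.
pose c := Num.min (p j 0) (q j 0).
have c_gt0 : 0 < c by rewrite lt_min p_gt0.
have c_le_p : c <= p j 0 by rewrite ge_min lexx.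
have c_le_q : c <= q j 0 by rewrite ge_min lexx orbT.
have [c_face rest_face] := in_face_diag_split r_face c_gt0 c_le_p c_le_q.
have c_ray_neq0 : c *: diag_ray j != 0 :> 'cV[R]_(n + mB + mB).
  by rewrite scaler_eq0 negb_or gt_eqF // diag_ray_neq0.
have [l l_gt0 ->] := extreme_ray_summand r_ext c_face rest_face c_ray_neq0.
by exists (l * c); rewrite ?mulr_gt0 // scalerA.
Qed.

Lemma extreme_face_ray_balanced {x p q} : pointed A B ->
  extreme_ray face (triple x p q) -> p - q = 0 ->
  exists j, same_ray (triple x p q) (diag_ray j).
Proof.
move=> AB_pointed r_ext /eqP; rewrite subr_eq0 => /eqP p_eq_q.
have [r_face r_neq0 _] := r_ext.
have [Ax Bx p_ge0 _ _] := (in_face_triple x p q).1 r_face.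
have x_eq0 : x = 0 by apply: pointed_ker_eq0 AB_pointed Ax _; rewrite Bx p_eq_q subrr.
have /matrix0Pn[j [k pj_neq0]] : p != 0.
  by apply: contraNneq r_neq0 => p0; rewrite x_eq0 -p_eq_q p0 triple0.
rewrite (ord1 k) in pj_neq0.
by exists j; apply: extreme_face_ray_diag r_ext _ _; rewrite -?p_eq_q lt_def pj_neq0 p_ge0.
Qed.

Lemma extreme_face_ray_lift {x p q} :
  extreme_ray face (triple x p q) -> p - q != 0 -> triple x p q = lift B x.
Proof.
move=> r_ext pq_neq0; have [r_face _ _] := r_ext.
have [_ Bx p_ge0 q_ge0 _] := (in_face_triple x p q).1 r_face.
have pq_disjoint j : p j 0 * q j 0 = 0.
  apply/eqP; apply: contraNT pq_neq0; rewrite mulf_eq0 negb_or => /andP[pj qj].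
  have pj_gt0 : 0 < p j 0 by rewrite lt_def pj p_ge0.
  have qj_gt0 : 0 < q j 0 by rewrite lt_def qj q_ge0.
  have [l _] := extreme_face_ray_diag r_ext pj_gt0 qj_gt0.
  by rewrite /diag_ray triple_scale => /triple_inj[_ -> ->]; rewrite subrr.
rewrite /lift Bx; congr triple; apply/matrixP => j k;
  rewrite (ord1 k) ?pospartE ?negpartE subcE;
  by case: (max0_disjoint (p_ge0 j) (q_ge0 j) (pq_disjoint j)).
Qed.

Lemma extreme_lift_circuit {x} :
  extreme_ray face (lift B x) -> B *m x != 0 -> circuit A B x.
Proof.
move=> x_ext Bx_neq0; have [x_face _ _] := x_ext.
have [Ax _] := (lift_in_faceP x).1 x_face.
split=> //; split; first by apply: contraNneq Bx_neq0 => ->; rewrite mulmx0.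
case=> y [Ay y_neq0]; rewrite properE => /andP[supp_sub supp_nsup].
have [e e_gt0 e_le] : exists2 e : R, 0 < e &
    forall i, e * `|(B *m y) i 0| <= `|(B *m x) i 0|.
  apply: exists_pos_mul_le => i; first exact: normr_ge0.
  by move/normr0_eq0/(supp_sub_eq0 supp_sub) ->; rewrite normr0.
pose w := e *: y.
have w_le i : `|(B *m w) i 0| <= `|(B *m x) i 0|.
  by rewrite -scalemxAr scalecE normrM gtr0_norm.
have Aw : A *m w = 0 by rewrite -scalemxAr Ay scaler0.
have plus_face := lift_perturb_in_face x_face Aw w_le.
have minus_face : face (lift B (x - w)).
  apply: lift_perturb_in_face x_face _ _ => [|i]; first by rewrite mulmxN Aw oppr0.
  by rewrite mulmxN mxE normrN.
have [l lift_eq] := extreme_ray_midpoint in_face_scale x_ext plus_face minus_face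
  (lift_midpoint w_le).
have ey_eq : e *: y = (l - 1) *: x.
  move/(congr1 (@zx R n mB)): lift_eq; rewrite triple_scale !zx_triple => xw_eq.
  by rewrite scalerBl scale1r -xw_eq addrAC subrr add0r.
pose k := e^-1 * (l - 1).
have y_eq : y = k *: x by rewrite -[y](scalerK (negbT (gt_eqF e_gt0))) ey_eq scalerA.
have k_neq0 : k != 0 by apply: contraNneq y_neq0 => k0; rewrite y_eq k0 scale0r.
by move: supp_nsup; rewrite y_eq -scalemxAr supp_scale // subxx.
Qed.

Lemma circuit_supp_scale {g x} : circuit A B g -> B *m g != 0 -> A *m x = 0 ->
  supp (B *m x) \subset supp (B *m g) -> exists c, x = c *: g.
Proof.
move=> [Ag [_ g_min]] /matrix0Pn[i [k Bgi]] Ax supp_sub; rewrite (ord1 k) in Bgi.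
(* [w] vanishes at [i], so minimality of [g] leaves only [w = 0]. *)
pose w := (B *m x) i 0 *: g - (B *m g) i 0 *: x.
have Bw j : (B *m w) j 0 = (B *m x) i 0 * (B *m g) j 0 - (B *m g) i 0 * (B *m x) j 0.
  by rewrite mulmxBr -!scalemxAr subcE !scalecE.
have w_eq0 : w = 0.
  apply/eqP/negPn/negP => w_neq0; apply: g_min; exists w; split=> //.
    by rewrite mulmxBr -!scalemxAr Ag Ax !scaler0 subr0.
  rewrite properE; apply/andP; split.
    apply/subsetP => j; rewrite !inE Bw; apply: contraNN => /eqP Bgj.
    by rewrite Bgj (supp_sub_eq0 supp_sub Bgj) !mulr0 subrr.
  by apply/subsetPn; exists i; rewrite !inE // Bw mulrC subrr eqxx.
exists ((B *m x) i 0 / (B *m g) i 0).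
move/eqP: w_eq0; rewrite subr_eq0 => /eqP wx.
by rewrite mulrC -scalerA wx scalerA mulVf // scale1r.
Qed.

Lemma lift_circuit_summand {g z1 z2} : circuit A B g -> B *m g != 0 ->
  in_cone A B z1 -> in_cone A B z2 -> lift B g = z1 + z2 ->
  exists2 c, 0 <= c & z1 = c *: lift B g.
Proof.
move=> g_circ Bg_neq0.
have [xu [pu [nu ->]]] := tripleP z1; have [xv [pv [nv ->]]] := tripleP z2.
move=> /in_cone_triple[Axu Bxu pu_ge0 nu_ge0] /in_cone_triple[_ _ pv_ge0 nv_ge0].
rewrite /lift triple_add => /triple_inj[_ pos_eq neg_eq].
have hP j : Num.max ((B *m g) j 0) 0 = pu j 0 + pv j 0.
  by rewrite -addcE -pos_eq pospartE.
have hN j : Num.max (- (B *m g) j 0) 0 = nu j 0 + nv j 0.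
  by rewrite -addcE -neg_eq negpartE.
have [c xu_eq] : exists c, xu = c *: g.
  apply: circuit_supp_scale => //; apply/subsetP => j; rewrite !inE.
  apply: contraNN => /eqP Bgj; rewrite Bxu subcE.
  move: (hP j) (hN j) (pu_ge0 j) (pv_ge0 j) (nu_ge0 j) (nv_ge0 j).
  by rewrite Bgj oppr0 maxxx => *; apply/eqP; lra.
have Bxu_eq j : pu j 0 - nu j 0 = c * (B *m g) j 0.
  by rewrite -subcE -Bxu xu_eq -scalemxAr scalecE.
have split_scale j := max0_split_scale (hP j) (hN j) (pu_ge0 j) (pv_ge0 j)
  (nu_ge0 j) (nv_ge0 j) (Bxu_eq j).
have /matrix0Pn[i [k Bgi]] := Bg_neq0; rewrite (ord1 k) in Bgi.
have [_ _ /(_ Bgi) c_ge0] := split_scale i.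
exists c => //; rewrite xu_eq triple_scale; congr triple; apply/matrixP => j k';
  rewrite (ord1 k') scalecE ?pospartE ?negpartE;
  by case: (split_scale j).
Qed.

Lemma extreme_lift_of_circuit {g} : circuit A B g -> B *m g != 0 ->
  face (lift B g) -> extreme_ray face (lift B g).
Proof.
move=> g_circ Bg_neq0 g_face; split=> //.
  apply: contraNneq Bg_neq0 => /(congr1 (@zx R n mB)).
  by rewrite -triple0 !zx_triple => ->; rewrite mulmx0.
move=> u v u_face v_face uv_eq.
have [cu cu_ge0 u_eq] := lift_circuit_summand g_circ Bg_neq0 u_face.1 v_face.1 uv_eq.
have [cv cv_ge0 v_eq] := lift_circuit_summand g_circ Bg_neq0 v_face.1 u_face.1
  (etrans uv_eq (addrC u v)).
by exists cu => //; exists cv.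
Qed.

Lemma circuit_mul_neq0 {g} : pointed A B -> circuit A B g -> B *m g != 0.
Proof.
move=> AB_pointed [Ag [g_neq0 _]].
by apply: contraNneq g_neq0 => /(pointed_ker_eq0 AB_pointed Ag) ->.
Qed.

End Face.

Theorem theorem5 (R : realFieldType) (mA mB n : nat)
  (A : 'M[R]_(mA, n)) (b : 'cV[R]_mA) (B : 'M[R]_(mB, n)) (d : 'cV[R]_mB)
  (x0 : 'cV[R]_n) :
  pointed A B -> in_poly A b B d x0 ->
  let F := in_face A B d x0 in
  (* at most mB extreme rays of the face satisfy y+ - y- = 0 *)
  (exists s : seq 'cV[R]_(n + mB + mB), (size s <= mB)%N /\
     forall r, extreme_ray F r -> zyp r - zym r = 0 ->
       exists2 t, t \in s & same_ray r t) /\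
  (* the remaining extreme rays are exactly those spanned by the
     (g, max(Bg,0), max(-Bg,0)) for feasible circuits g *)
  (forall r, extreme_ray F r -> zyp r - zym r != 0 ->
     exists2 g, circuit A B g /\ feasible_dir A b B d x0 g &
       same_ray r (triple g (pospart (B *m g)) (negpart (B *m g)))) /\
  (forall g, circuit A B g -> feasible_dir A b B d x0 g ->
     let r := triple g (pospart (B *m g)) (negpart (B *m g)) in
     extreme_ray F r /\ zyp r - zym r != 0) /\
  (* every feasible direction has a representative in the face *)
  (forall u, feasible_dir A b B d x0 u ->
     exists yp ym : 'cV[R]_mB, F (triple u yp ym)).
Proof.
move=> AB_pointed x0_in F; split; [|split; [|split]].
- exists [seq diag_ray j | j <- enum 'I_mB]; split.
    by rewrite size_map size_enum_ord.
  move=> r; have [x [p [q ->]]] := tripleP r.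
  rewrite zyp_triple zym_triple => r_ext /(extreme_face_ray_balanced AB_pointed r_ext).
  by case=> j r_j; exists (diag_ray j) => //; rewrite map_f ?mem_enum.
- move=> r; have [x [p [q ->]]] := tripleP r.
  rewrite zyp_triple zym_triple => r_ext pq_neq0.
  have r_lift := extreme_face_ray_lift r_ext pq_neq0.
  have [_ p_eq q_eq] := triple_inj r_lift.
  have Bx_neq0 : B *m x != 0 by rewrite -(pospart_sub_negpart (B *m x)) -p_eq -q_eq.
  rewrite r_lift in r_ext *; exists x; last by exists 1; rewrite ?ltr01 ?scale1r.
  split; first exact: extreme_lift_circuit r_ext Bx_neq0.
  by apply/(feasible_lift_in_face _ x0_in); case: r_ext.
- move=> g g_circ g_feas /=; have Bg_neq0 := circuit_mul_neq0 AB_pointed g_circ.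
  split; last by rewrite zyp_triple zym_triple pospart_sub_negpart.
  exact/(extreme_lift_of_circuit g_circ Bg_neq0)/(feasible_lift_in_face _ x0_in).
- move=> u u_feas; exists (pospart (B *m u)), (negpart (B *m u)).
  exact/(feasible_lift_in_face _ x0_in).
Qed.
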